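(* Let $L$ be a C-loop with nucleus $N$. Then $N$ is a normal subloop (indeed a normal subgroup) of $L$.
   Context: A loop is a set with a binary operation and neutral element $e$ in which left and right division are uniquely solvable. A C-loop is a loop satisfying $x(y(yz))=((xy)y)z$ for all $x,y,z$. The left nucleus is $N_\lambda=\{a: a(yz)=(ay)z\ \forall y,z\}$, the middle nucleus $N_\mu=\{a: y(az)=(ya)z\ \forall y,z\}$, the right nucleus $N_\rho=\{a: y(za)=(yz)a\ \forall y,z\}$, and the nucleus is $N=N_\lambda\cap N_\mu\cap N_\rho$. A subloop $K$ of $L$ is normal if $xK=Kx$, $x(yK)=(xy)K$ and $x(Ky)=(xK)y$ for all $x,y\in L$. *)

Set Implicit Arguments.

Section LoopDefs.
Variables (L : Type) (op : L -> L -> L) (e : L).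

Definition is_loop : Prop :=
  (forall x, op e x = x /\ op x e = x) /\
  (forall a b, exists! x, op a x = b) /\
  (forall a b, exists! y, op y a = b).

Definition C_law : Prop :=
  forall x y z, op x (op y (op y z)) = op (op (op x y) y) z.

Definition left_nucleus (a : L) : Prop :=
  forall y z, op a (op y z) = op (op a y) z.
Definition middle_nucleus (a : L) : Prop :=
  forall y z, op y (op a z) = op (op y a) z.
Definition right_nucleus (a : L) : Prop :=
  forall y z, op y (op z a) = op (op y z) a.
Definition nucleus (a : L) : Prop :=
  left_nucleus a /\ middle_nucleus a /\ right_nucleus a.

Definition subloop (K : L -> Prop) : Prop :=
  K e /\
  (forall a b, K a -> K b -> K (op a b)) /\
  (forall a b x, K a -> K b -> op a x = b -> K x) /\
  (forall a b y, K a -> K b -> op y a = b -> K y).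

Definition lcoset (x : L) (K : L -> Prop) (z : L) : Prop :=
  exists k, K k /\ z = op x k.
Definition rcoset (K : L -> Prop) (x : L) (z : L) : Prop :=
  exists k, K k /\ z = op k x.

(* Normal subloop: xK = Kx, x(yK) = (xy)K, x(Ky) = (xK)y. *)
Definition normal_subloop (K : L -> Prop) : Prop :=
  subloop K /\
  (forall x z, lcoset x K z <-> rcoset K x z) /\
  (forall x y z, (exists k, K k /\ z = op x (op y k)) <->
                 (exists k, K k /\ z = op (op x y) k)) /\
  (forall x y z, (exists k, K k /\ z = op x (op k y)) <->
                 (exists k, K k /\ z = op (op x k) y)).

Definition normal_subgroup (K : L -> Prop) : Prop :=
  normal_subloop K /\
  (forall a b c, K a -> K b -> K c -> op a (op b c) = op (op a b) c).

End LoopDefs.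

(* In a C-loop every element has a two-sided inverse with the left and right
   inverse properties.  The C-law together with the two alternative laws puts
   every square y y into the middle nucleus, and in a C-loop the middle nucleus
   is contained in the left and right nuclei; so squares are nuclear.  For a
   nuclear n, (x n) x = (x n)^2 n^-1 is then nuclear too, and
   x n = ((x n) x (x^-1)^2) x exhibits xN inside Nx (symmetrically Nx inside
   xN).  The two remaining normality conditions hold for any set of nuclear
   elements. *)
From Stdlib Require Import Setoid.

Set Implicit Arguments.

Lemma ex_eq_iff (L : Type) (K : L -> Prop) (f g : L -> L) (z : L) :
  (forall k, K k -> f k = g k) ->
  (exists k, K k /\ z = f k) <-> (exists k, K k /\ z = g k).
Proof.
  intro Hfg; split; intros [k [Hk ->]]; exists k; split; auto.
  symmetry; auto.
Qed.

Section Loops.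
Variables (L : Type) (op : L -> L -> L) (e : L).
Hypothesis Hloop : is_loop op e.
Local Infix "·" := op (at level 40, left associativity).

Lemma mul1x x : e · x = x.
Proof. apply Hloop. Qed.

Lemma mulx1 x : x · e = x.
Proof. apply Hloop. Qed.

Lemma exists_ldiv a b : exists x, a · x = b.
Proof. destruct (proj1 (proj2 Hloop) a b) as [x [Hx _]]. exists x; exact Hx. Qed.

Lemma exists_rdiv a b : exists y, y · a = b.
Proof. destruct (proj2 (proj2 Hloop) a b) as [y [Hy _]]. exists y; exact Hy. Qed.

Lemma mulI a x y : a · x = a · y -> x = y.
Proof.
  intro Hxy. destruct (proj1 (proj2 Hloop) a (a · x)) as [w [_ Huniq]].
  rewrite <- (Huniq x eq_refl), <- (Huniq y (eq_sym Hxy)). reflexivity.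
Qed.

Lemma mulIr a x y : x · a = y · a -> x = y.
Proof.
  intro Hxy. destruct (proj2 (proj2 Hloop) a (x · a)) as [w [_ Huniq]].
  rewrite <- (Huniq x eq_refl), <- (Huniq y (eq_sym Hxy)). reflexivity.
Qed.

Lemma nucleus_e : nucleus op e.
Proof. repeat split; intros y z; rewrite ?mul1x, ?mulx1; reflexivity. Qed.

Lemma nucleus_mul a b : nucleus op a -> nucleus op b -> nucleus op (a · b).
Proof.
  intros [aL [aM aR]] [bL [bM bR]]. repeat split; intros y z.
  - rewrite <- (aL b (y · z)), (bL y z), (aL (b · y) z), (aL b y). reflexivity.
  - rewrite <- (aL b z), (aM y (b · z)), (bM (y · a) z), (bR y a). reflexivity.
  - rewrite (bR z a), (bR y (z · a)), (aR y z), (bR (y · z) a). reflexivity.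
Qed.

Lemma nucleus_inv a a' : nucleus op a -> a · a' = e -> nucleus op a'.
Proof.
  intros [aL [aM aR]] Haa'.
  assert (Ha'a : a' · a = e).
  { apply (mulI (a := a)). rewrite aL, Haa', mul1x, mulx1. reflexivity. }
  assert (aK : forall v, a · (a' · v) = v) by (intro v; rewrite aL, Haa', mul1x; reflexivity).
  assert (Ka : forall w, w · a' · a = w) by (intro w; rewrite <- aR, Ha'a, mulx1; reflexivity).
  repeat split; intros y z.
  - apply (mulI (a := a)). rewrite aK, aL, aK. reflexivity.
  - rewrite <- (Ka y) at 1. rewrite <- aM, aK. reflexivity.
  - apply (mulIr (a := a)). rewrite Ka, <- aR, Ka. reflexivity.
Qed.

Lemma nucleus_subloop : subloop op e (nucleus op).
Proof.
  split; [exact nucleus_e | split; [exact nucleus_mul | split]].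
  - intros a b x Ha Hb Hx. destruct (exists_ldiv a e) as [a' Haa'].
    assert (Hx' : x = a' · b).
    { apply (mulI (a := a)). rewrite Hx, (proj1 Ha), Haa', mul1x. reflexivity. }
    rewrite Hx'. exact (nucleus_mul (nucleus_inv Ha Haa') Hb).
  - intros a b y Ha Hb Hy. destruct (exists_ldiv a e) as [a' Haa'].
    assert (Hy' : y = b · a').
    { rewrite <- Hy, <- (proj1 (proj2 Ha)), Haa', mulx1. reflexivity. }
    rewrite Hy'. exact (nucleus_mul Hb (nucleus_inv Ha Haa')).
Qed.

Hypothesis HC : C_law op.

Lemma left_alternative y z : y · (y · z) = y · y · z.
Proof. pose proof (HC e y z) as H. rewrite !mul1x in H. exact H. Qed.

Lemma right_alternative x y : x · (y · y) = x · y · y.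
Proof. pose proof (HC x y e) as H. rewrite !mulx1 in H. exact H. Qed.

Lemma mulrK y y' w : y · y' = e -> w · y · y' = w.
Proof.
  intro Hyy'. destruct (exists_rdiv y w) as [x <-].
  pose proof (HC x y y') as H. rewrite Hyy', mulx1 in H. symmetry; exact H.
Qed.

Lemma rinv_linv y y' : y · y' = e -> y' · y = e.
Proof.
  intro Hyy'. destruct (exists_rdiv y e) as [l Hly].
  assert (Hl : forall v, l · (y · v) = v).
  { intro v. destruct (exists_ldiv y v) as [z <-].
    pose proof (HC l y z) as H. rewrite Hly, mul1x in H. exact H. }
  pose proof (Hl y') as H. rewrite Hyy', mulx1 in H. subst l. exact Hly.
Qed.

Lemma mulKr y y' v : y · y' = e -> y' · (y · v) = v.
Proof.
  intro Hyy'. destruct (exists_ldiv y v) as [z <-].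
  pose proof (HC y' y z) as H. rewrite (rinv_linv Hyy'), mul1x in H. exact H.
Qed.

Lemma square_middle_nucleus y : middle_nucleus op (y · y).
Proof. intros a c. rewrite <- left_alternative, HC, right_alternative. reflexivity. Qed.

(* With p := u a and q := a^-1 u^-1 we have p q = e and ((v u) a) q = v. *)
Lemma middle_right_nucleus a : middle_nucleus op a -> right_nucleus op a.
Proof.
  intros aM v u.
  destruct (exists_ldiv a e) as [a' Haa'], (exists_ldiv u e) as [u' Huu'].
  assert (Hpq : u · a · (a' · u') = e).
  { rewrite <- aM, (mulKr _ (rinv_linv Haa')), Huu'. reflexivity. }
  assert (Hv : v · u · a · (a' · u') = v).
  { rewrite <- aM, (mulKr _ (rinv_linv Haa')), (mulrK _ Huu'). reflexivity. }
  rewrite <- Hv at 1. rewrite (mulrK _ (rinv_linv Hpq)). reflexivity.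
Qed.

Lemma middle_left_nucleus a : middle_nucleus op a -> left_nucleus op a.
Proof.
  intros aM u v.
  destruct (exists_ldiv a e) as [a' Haa'], (exists_ldiv u e) as [u' Huu'].
  assert (Hqp : u' · a' · (a · u) = e).
  { rewrite aM, (mulrK _ (rinv_linv Haa')), (rinv_linv Huu'). reflexivity. }
  assert (Hq : u' · a' · (a · (u · v)) = v).
  { rewrite aM, (mulrK _ (rinv_linv Haa')), (mulKr _ Huu'). reflexivity. }
  rewrite <- Hq at 2. rewrite (mulKr _ Hqp). reflexivity.
Qed.

Lemma square_nucleus y : nucleus op (y · y).
Proof.
  pose proof (square_middle_nucleus y) as Hmid.
  split; [| split]; [apply middle_left_nucleus | | apply middle_right_nucleus]; exact Hmid.
Qed.

Lemma nucleus_sandwich x n : nucleus op n -> nucleus op (x · n · x).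
Proof.
  intro Hn. destruct (exists_ldiv n e) as [n' Hnn'].
  replace (x · n · x) with (x · n · (x · n) · n').
  - exact (nucleus_mul (square_nucleus _) (nucleus_inv Hn Hnn')).
  - rewrite (proj2 (proj2 Hn)), (mulrK _ Hnn'). reflexivity.
Qed.

Lemma lcoset_sub_rcoset x n :
  nucleus op n -> exists k, nucleus op k /\ x · n = k · x.
Proof.
  intro Hn. destruct (exists_ldiv x e) as [x' Hxx'].
  exists (x · n · x · (x' · x')). split.
  - exact (nucleus_mul (nucleus_sandwich x Hn) (square_nucleus x')).
  - rewrite <- (square_middle_nucleus x'), <- left_alternative,
      (rinv_linv Hxx'), mulx1, (mulrK _ Hxx'). reflexivity.
Qed.

Lemma rcoset_sub_lcoset x n :
  nucleus op n -> exists k, nucleus op k /\ n · x = x · k.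
Proof.
  intro Hn. destruct (exists_ldiv x e) as [x' Hxx'].
  exists (x' · x' · (x · n · x)). split.
  - exact (nucleus_mul (square_nucleus x') (nucleus_sandwich x Hn)).
  - rewrite <- (proj1 (proj2 Hn)), (proj1 (square_nucleus x')), <- left_alternative,
      (rinv_linv Hxx'), mulx1, (mulKr _ (rinv_linv Hxx')). reflexivity.
Qed.

Lemma nucleus_normal : normal_subloop op e (nucleus op).
Proof.
  split; [exact nucleus_subloop | split; [| split]].
  - intros x z; split; intros [n [Hn ->]].
    + exact (lcoset_sub_rcoset x Hn).
    + exact (rcoset_sub_lcoset x Hn).
  - intros x y z. apply ex_eq_iff. intros k Hk. apply Hk.
  - intros x y z. apply ex_eq_iff. intros k Hk. apply Hk.
Qed.

End Loops.

Theorem proposition2p5 (L : Type) (op : L -> L -> L) (e : L)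
  (HL : is_loop op e) (HC : C_law op) :
  normal_subloop op e (nucleus op) /\ normal_subgroup op e (nucleus op).
Proof.
  pose proof (nucleus_normal HL HC) as Hnormal.
  split; [exact Hnormal | split; [exact Hnormal |]].
  intros a b c [aL _] _ _. apply aL.
Qed.
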